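(* Let $\kappa,\lambda$ be infinite cardinals, $\alpha\leq\kappa^+$ an uncountable cardinal and $\beta\leq\lambda^+$ an infinite cardinal. If there is an injective group homomorphism $j:P(\kappa,\alpha)\to P(\lambda,\beta)$, then, writing $j_\nu=p_\nu\circ j$ for $\nu\in\lambda$ (where $p_\nu$ is the $\nu$-th coordinate projection) and $F_\nu=\{\xi\in\kappa:j_\nu(e_\xi)\neq0\}$, each $F_\nu$ is finite and $\kappa\leq|\{\nu\in\lambda:F_\nu\neq\varnothing\}|$; in particular $\kappa\leq\lambda$.
   Context: $\mathbb{Z}^\kappa$ is the group of functions $x:\kappa\to\mathbb{Z}$ under pointwise addition, $\mathrm{supp}(x)=\{\xi\in\kappa:x(\xi)\neq0\}$, and $P(\kappa,\alpha)=\{x\in\mathbb{Z}^\kappa:|\mathrm{supp}(x)|<\alpha\}$. For $\xi\in\kappa$, $e_\xi$ is the function with $e_\xi(\xi)=1$ and $e_\xi(\eta)=0$ for $\eta\neq\xi$. For $\nu\in\lambda$, $p_\nu:P(\lambda,\beta)\to\mathbb{Z}$ is $p_\nu(y)=y(\nu)$. *)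

(* Cardinals are represented by types (a cardinal = the
   cardinality of a type); cardinal comparison by injections. *)
From Stdlib Require Import ZArith List ClassicalEpsilon.
Open Scope Z_scope.

Definition allT (X : Type) : X -> Prop := fun _ => True.

Definition card_le {X Y : Type} (P : X -> Prop) (Q : Y -> Prop) : Prop :=
  exists f : X -> Y, (forall x, P x -> Q (f x)) /\
    (forall x y, P x -> P y -> f x = f y -> x = y).

Definition card_lt {X Y : Type} (P : X -> Prop) (Q : Y -> Prop) : Prop :=
  card_le P Q /\ ~ card_le Q P.

Definition infinite_type (X : Type) : Prop := card_le (allT nat) (allT X).
Definition uncountable_type (X : Type) : Prop := ~ card_le (allT X) (allT nat).

(* |A| <= |K|^+  <->  every cardinal below |A| is <= |K| *)
Definition le_succ_card (A K : Type) : Prop :=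
  forall S : A -> Prop, card_lt S (allT A) -> card_le S (allT K).

Definition finite_set {X : Type} (F : X -> Prop) : Prop :=
  exists l : list X, forall x, F x -> In x l.

Definition supp {K : Type} (x : K -> Z) : K -> Prop := fun k => x k <> 0.

Definition inP (K A : Type) (x : K -> Z) : Prop := card_lt (supp x) (allT A).

Definition addf {K : Type} (x y : K -> Z) : K -> Z := fun k => x k + y k.

Definition unitv {K : Type} (xi : K) : K -> Z :=
  fun eta => if excluded_middle_informative (xi = eta) then 1 else 0.

Definition Fset {K L : Type} (j : (K -> Z) -> (L -> Z)) (nu : L) : K -> Prop :=
  fun xi => j (unitv xi) nu <> 0.

From Stdlib Require Import ZArith List Lia FunctionalExtensionality.
From Stdlib Require Import ClassicalEpsilon Classical FinFun Cantor.
From mathcomp Require classical_sets.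

(* Specker's argument: an additive map [h] from [Z^N] to [Z] kills almost all [e_n].
   Set [y_k = e_k + r_k y_(k+1)] (an infinite sum in [Z^N]) with rapidly growing
   integers [r_k]; then [h y_0 = sum_(i<k) M_i h(e_i) + M_k h(y_k)] with
   [M_k = r_0 ... r_(k-1)], and the growth of [M_k] forces [h(y_k) = 0], hence
   [h(e_k) = 0], for all large [k]. Countably supported vectors lie in [P(kappa, alpha)]
   since [alpha] is uncountable, so every [F_nu] is finite. Injectivity of [j] puts
   every [xi] in some [F_nu]; thus [kappa] is covered by finite sets indexed by an
   infinite set [D], and [kappa <= |D * N| = |D|], the last equality by Zorn's lemma. *)

Local Open Scope nat_scope.

Lemma card_le_trans {X Y W : Type} (P : X -> Prop) (Q : Y -> Prop) (R : W -> Prop) :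
  card_le P Q -> card_le Q R -> card_le P R.
Proof.
  intros [f [Hf Hfinj]] [g [Hg Hginj]].
  exists (fun x => g (f x)). split; auto.
Qed.

Lemma card_le_sub {X : Type} (P Q : X -> Prop) : (forall x, P x -> Q x) -> card_le P Q.
Proof. intros H. exists (fun x => x). split; auto. Qed.

Fixpoint list_index {X : Type} (x : X) (l : list X) : nat :=
  match l with
  | nil => 0
  | y :: l' => if excluded_middle_informative (y = x) then 0 else S (list_index x l')
  end.

Lemma list_index_inj {X : Type} (l : list X) x y :
  In x l -> In y l -> list_index x l = list_index y l -> x = y.
Proof.
  induction l as [|a l IH]; simpl; [tauto|].
  destruct (excluded_middle_informative (a = x)), (excluded_middle_informative (a = y));
    intros Hx Hy E; try congruence.
  apply IH; [tauto | tauto | congruence].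
Qed.

Lemma finite_card_le_nat {X : Type} (F : X -> Prop) : finite_set F -> card_le F (allT nat).
Proof.
  intros [l Hl]. exists (fun x => list_index x l). split.
  - intros; exact I.
  - intros x y Hx Hy. apply list_index_inj; auto.
Qed.

Lemma injective_seq_not_finite {X : Type} (F : X -> Prop) (s : nat -> X) :
  Injective s -> (forall n, F (s n)) -> ~ finite_set F.
Proof.
  intros Hinj Hs [l Hl].
  assert (Hnd : NoDup (map s (seq 0 (S (length l))))).
  { apply Injective_map_NoDup; [exact Hinj | apply seq_NoDup]. }
  apply NoDup_incl_length with (l' := l) in Hnd.
  - rewrite length_map, length_seq in Hnd. lia.
  - intros y Hy. apply in_map_iff in Hy as [n [<- _]]. apply Hl, Hs.
Qed.

Lemma not_finite_injective_seq {X : Type} (F : X -> Prop) :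
  ~ finite_set F -> exists s : nat -> X, (forall n, F (s n)) /\ Injective s.
Proof.
  intros Hnf.
  assert (Hfresh : forall l : list X, exists x, F x /\ ~ In x l).
  { intros l. apply NNPP. intros Hno. apply Hnf. exists l. intros x Fx.
    apply NNPP. intros Hx. apply Hno. exists x; auto. }
  destruct (choice _ Hfresh) as [pick Hpick].
  pose (prefix := fix prefix (n : nat) : list X :=
          match n with 0 => nil | S n => pick (prefix n) :: prefix n end).
  exists (fun n => pick (prefix n)). split; [intros n; apply Hpick|].
  assert (Hin : forall m n, m < n -> In (pick (prefix m)) (prefix n)).
  { intros m n. induction n as [|n IH]; intros H; [lia|]. simpl.
    destruct (Nat.eq_dec m n) as [->|]; [now left | right; apply IH; lia]. }
  intros n m E. destruct (Nat.lt_trichotomy n m) as [H|[H|H]]; trivial; exfalso.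
  - apply (proj2 (Hpick (prefix m))). rewrite <- E. now apply Hin.
  - apply (proj2 (Hpick (prefix n))). rewrite E. now apply Hin.
Qed.

Lemma not_finite_card_le_nat {X : Type} (F : X -> Prop) :
  ~ finite_set F -> card_le (allT nat) F.
Proof.
  intros Hnf. destruct (not_finite_injective_seq F Hnf) as [s [Hs Hinj]].
  exists s. split; auto.
Qed.

Lemma card_le_nat_not_finite {X : Type} (F : X -> Prop) :
  card_le (allT nat) F -> ~ finite_set F.
Proof.
  intros [s [Hs Hinj]]. apply (injective_seq_not_finite F s).
  - intros n m. apply Hinj; exact I.
  - intros n. apply Hs. exact I.
Qed.

Lemma uncountable_card_le_nat (A : Type) : uncountable_type A -> card_le (allT nat) (allT A).
Proof.
  intros hA. apply not_finite_card_le_nat. intros Hf. apply hA, finite_card_le_nat, Hf.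
Qed.

Lemma to_nat_inj : Injective to_nat.
Proof. intros p q E. now rewrite <- (cancel_of_to p), <- (cancel_of_to q), E. Qed.

Section ProdNat.
Variables (X : Type) (I : X -> Prop).

Definition range (G : (X * nat) * X -> Prop) (x : X) : Prop := exists p, G (p, x).

(* [G] is the graph of a bijection from [range G * nat] onto [range G], inside [I]. *)
Record nat_matching (G : (X * nat) * X -> Prop) : Prop := {
  matching_functional : forall p x x', G (p, x) -> G (p, x') -> x = x';
  matching_injective : forall p p' x, G (p, x) -> G (p', x) -> p = p';
  matching_domain : forall p, (exists x, G (p, x)) <-> range G (fst p);
  matching_in : forall p x, G (p, x) -> I x }.

Lemma nat_matching_union (F : ((X * nat) * X -> Prop) -> Prop) :
  (forall G, F G -> nat_matching G) ->
  (forall G H, F G -> F H -> (forall t, G t -> H t) \/ (forall t, H t -> G t)) ->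
  nat_matching (fun t => exists2 G, F G & G t).
Proof.
  intros HF Htot.
  assert (Hup : forall G1 G2 t1 t2, F G1 -> F G2 -> G1 t1 -> G2 t2 ->
                  exists G, F G /\ G t1 /\ G t2).
  { intros G1 G2 t1 t2 F1 F2 H1 H2.
    destruct (Htot G1 G2 F1 F2) as [S|S]; [exists G2 | exists G1]; auto. }
  split.
  - intros p x x' [G1 F1 H1] [G2 F2 H2].
    destruct (Hup _ _ _ _ F1 F2 H1 H2) as [G [FG [Hx Hx']]].
    exact (matching_functional _ (HF G FG) p x x' Hx Hx').
  - intros p p' x [G1 F1 H1] [G2 F2 H2].
    destruct (Hup _ _ _ _ F1 F2 H1 H2) as [G [FG [Hp Hp']]].
    exact (matching_injective _ (HF G FG) p p' x Hp Hp').
  - intros p. split.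
    + intros [x [G FG Hx]].
      destruct (proj1 (matching_domain _ (HF G FG) p) (ex_intro _ x Hx)) as [q Hq].
      exists q, G; auto.
    + intros [q [G FG Hq]].
      destruct (proj2 (matching_domain _ (HF G FG) p) (ex_intro _ q Hq)) as [x Hx].
      exists x, G; auto.
  - intros p x [G FG Hx]. exact (matching_in _ (HF G FG) p x Hx).
Qed.

(* Keeps [injection] from unfolding [to_nat]. *)
Local Opaque to_nat.
Lemma nat_matching_extend (G : (X * nat) * X -> Prop) (c : nat -> X) :
  nat_matching G -> Injective c -> (forall n, I (c n)) -> (forall n, ~ range G (c n)) ->
  nat_matching (fun t => G t \/ exists n m, t = ((c n, m), c (to_nat (n, m)))).
Proof.
  intros HG Hc HcI Hfresh.
  assert (Hdom : forall n m x, ~ G ((c n, m), x)).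
  { intros n m x H. apply (Hfresh n).
    exact (proj1 (matching_domain _ HG (c n, m)) (ex_intro _ x H)). }
  assert (Hran : forall p n, ~ G (p, c n)).
  { intros p n H. apply (Hfresh n). exists p; exact H. }
  split.
  - intros p x x' [H|[n [m E]]] [H'|[n' [m' E']]];
      repeat match goal with E : (_, _) = (_, _) |- _ => injection E as ? ?; subst end.
    + exact (matching_functional _ HG _ _ _ H H').
    + now destruct (Hdom n' m' x).
    + now destruct (Hdom n m x').
    + match goal with E : c _ = c _ |- _ => apply Hc in E; subst end. reflexivity.
  - intros p p' x [H|[n [m E]]] [H'|[n' [m' E']]];
      repeat match goal with E : (_, _) = (_, _) |- _ => injection E as ? ?; subst end.
    + exact (matching_injective _ HG _ _ _ H H').
    + now destruct (Hran p (to_nat (n', m'))).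
    + now destruct (Hran p' (to_nat (n, m))).
    + match goal with E : c _ = c _ |- _ => apply Hc, to_nat_inj in E; injection E as -> -> end.
      reflexivity.
  - intros [x k]; simpl; split.
    + intros [y [H|[n [m E]]]].
      * destruct (proj1 (matching_domain _ HG (x, k)) (ex_intro _ y H)) as [q Hq].
        exists q. now left.
      * injection E as -> -> ->. destruct (of_nat n) as [n0 m0] eqn:En.
        exists (c n0, m0). right. exists n0, m0. rewrite <- En, cancel_to_of. reflexivity.
    + intros [q [H|[n [m E]]]].
      * destruct (proj2 (matching_domain _ HG (x, k)) (ex_intro _ q H)) as [y Hy].
        exists y. now left.
      * injection E as -> ->. exists (c (to_nat (to_nat (n, m), k))). right.
        exists (to_nat (n, m)), k. reflexivity.
  - intros p x [H|[n [m E]]].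
    + exact (matching_in _ HG _ _ H).
    + injection E as -> ->. apply HcI.
Qed.

Lemma nat_matching_cofinite :
  exists G, nat_matching G /\ finite_set (fun x => I x /\ ~ range G x).
Proof.
  destruct (@classical_sets.Zorn_bigcup _ nat_matching) as [G [HG Hmax]].
  { intros F HF Htot. apply nat_matching_union; [exact HF|].
    intros G H FG FH. exact (Htot G H FG FH). }
  exists G. split; [exact HG|].
  apply NNPP. intros Hnf.
  destruct (not_finite_injective_seq _ Hnf) as [c [Hc Hinj]].
  refine (Hmax _ (conj (fun t H => or_introl H) _)
                (nat_matching_extend G c HG Hinj (fun n => proj1 (Hc n)) (fun n => proj2 (Hc n)))).
  intros Hsub. apply (proj2 (Hc 0)).
  apply (matching_domain _ HG (c 0, 0)). exists (c (to_nat (0, 0))).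
  apply Hsub. right. exists 0, 0. reflexivity.
Qed.

Lemma card_le_prod_nat :
  card_le (allT nat) I -> card_le (fun p : X * nat => I (fst p)) I.
Proof.
  intros HI. destruct nat_matching_cofinite as [G [HG [rest Hrest]]].
  assert (Hd0 : exists d0, range G d0).
  { apply NNPP. intros Hno. apply (card_le_nat_not_finite I HI).
    exists rest. intros x Ix. apply Hrest. split; [exact Ix|]. intros Hx. apply Hno. now exists x. }
  destruct Hd0 as [d0 Hd0].
  assert (Himg : forall p, exists x, range G (fst p) -> G (p, x)).
  { intros p. destruct (classic (range G (fst p))) as [H|H].
    - destruct (proj2 (matching_domain _ HG p) H) as [x Hx]. now exists x.
    - exists d0. contradiction. }
  destruct (choice _ Himg) as [g Hg].
  assert (Hg_inj : forall p p', range G (fst p) -> range G (fst p') -> g p = g p' -> p = p').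
  { intros p p' H H' E. apply (matching_injective _ HG p p' (g p)); [now apply Hg|].
    rewrite E. now apply Hg. }
  (* [range G] is used through even second coordinates, the finite rest through odd ones at [d0] *)
  exists (fun p : X * nat =>
            if excluded_middle_informative (range G (fst p)) then g (fst p, 2 * snd p)
            else g (d0, S (2 * to_nat (list_index (fst p) rest, snd p)))).
  split.
  - intros [x n] Ix. simpl.
    destruct (excluded_middle_informative (range G x)) as [Dx|Dx];
      eapply (matching_in _ HG); apply Hg; assumption.
  - intros [x n] [x' n'] Ix Ix'. simpl in *.
    destruct (excluded_middle_informative (range G x)) as [Dx|Dx];
    destruct (excluded_middle_informative (range G x')) as [Dx'|Dx']; intros E;
      apply Hg_inj in E; try assumption.
    + injection E as -> En. f_equal. lia.
    + injection E. lia.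
    + injection E. lia.
    + injection E as En.
      assert (Ep : to_nat (list_index x rest, n) = to_nat (list_index x' rest, n')) by lia.
      apply to_nat_inj in Ep.
      injection Ep as Ei ->. f_equal. apply (list_index_inj rest); auto.
Qed.

End ProdNat.
Local Open Scope Z_scope.

Definition scal {U : Type} (c : Z) (x : U -> Z) : U -> Z := fun u => c * x u.

Lemma additive_scal {U : Type} (h : (U -> Z) -> Z) :
  (forall x y, h (addf x y) = h x + h y) -> forall c x, 0 <= c -> h (scal c x) = c * h x.
Proof.
  intros h_add c x Hc. rewrite <- (Z2Nat.id c Hc). induction (Z.to_nat c) as [|m IH].
  - assert (E : addf (scal 0 x) (scal 0 x) = scal 0 x).
    { apply functional_extensionality. intros u. unfold addf, scal. lia. }
    pose proof (h_add (scal 0 x) (scal 0 x)) as H. rewrite E in H. simpl. lia.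
  - assert (E : scal (Z.of_nat (S m)) x = addf x (scal (Z.of_nat m) x)).
    { apply functional_extensionality. intros u. unfold addf, scal. lia. }
    rewrite E, h_add, IH. lia.
Qed.

(* Returns [(M_k, T_k)], where [T_k] bounds [|sum_(i<k) M_i a_i|] and the choice
   [M_(k+1) = M_k * (2 T_(k+1) + 2)] keeps [2 T_k < M_k]. *)
Fixpoint specker_data (a : nat -> Z) (k : nat) : Z * Z :=
  match k with
  | O => (1, 0)
  | S k => let (m, t) := specker_data a k in
           (m * (2 * (t + m * Z.abs (a k)) + 2), t + m * Z.abs (a k))
  end.

Definition specker_weight a k := fst (specker_data a k).
Definition specker_bound a k := snd (specker_data a k).
Definition specker_ratio a k := 2 * specker_bound a (S k) + 2.

Fixpoint specker_sum (a : nat -> Z) (k : nat) : Z :=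
  match k with O => 0 | S k => specker_sum a k + specker_weight a k * a k end.

Lemma specker_weight_S a k : specker_weight a (S k) = specker_weight a k * specker_ratio a k.
Proof.
  unfold specker_weight, specker_ratio, specker_bound. simpl. now destruct (specker_data a k).
Qed.

Lemma specker_bound_S a k :
  specker_bound a (S k) = specker_bound a k + specker_weight a k * Z.abs (a k).
Proof. unfold specker_weight, specker_bound. simpl. now destruct (specker_data a k). Qed.

Lemma specker_invariants a k :
  1 <= specker_weight a k /\ 0 <= specker_bound a k /\
  2 * specker_bound a k < specker_weight a k /\ Z.of_nat k < specker_weight a k /\
  Z.abs (specker_sum a k) <= specker_bound a k.
Proof.
  induction k as [|k IH]; [cbn; lia|].
  destruct IH as [HM [HT [HTM [HkM Hs]]]].
  rewrite specker_weight_S. unfold specker_ratio. rewrite specker_bound_S. simpl specker_sum.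
  set (M := specker_weight a k) in *. set (T := specker_bound a k) in *.
  assert (Hinc : 0 <= M * Z.abs (a k)) by nia.
  assert (Habs : Z.abs (M * a k) = M * Z.abs (a k)) by (rewrite Z.abs_mul; f_equal; lia).
  set (T' := T + M * Z.abs (a k)).
  assert (M * (2 * T' + 2) >= 2 * T' + 2) by nia.
  assert (M * (2 * T' + 2) >= 2 * M) by nia.
  rewrite Nat2Z.inj_succ. lia.
Qed.

Lemma specker_ratio_nonneg a k : 0 <= specker_ratio a k.
Proof. unfold specker_ratio. pose proof (specker_invariants a (S k)). lia. Qed.

Lemma expansion_tail_zero (t0 : Z) (s M t : nat -> Z) :
  (forall k, t0 = s k + M k * t k) -> (forall k, 2 * Z.abs (s k) < M k) ->
  (forall k, Z.of_nat k < M k) -> forall k, 2 * Z.abs t0 <= Z.of_nat k -> t k = 0.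
Proof.
  intros Hexp Hs HM k Hk. specialize (Hexp k). specialize (Hs k). specialize (HM k).
  destruct (Z.lt_trichotomy (t k) 0) as [Hn|[Hz|Hp]]; [exfalso|exact Hz|exfalso]; nia.
Qed.

Fixpoint specker_coef (a : nat -> Z) (k d : nat) : Z :=
  match d with O => 1 | S d => specker_ratio a k * specker_coef a (S k) d end.

(* [y_k = sum_(n >= k) (r_k ... r_(n-1)) e_n], so that [y_k = e_k + r_k y_(k+1)]. *)
Definition specker_vec (a : nat -> Z) (k : nat) : nat -> Z :=
  fun n => if (n <? k)%nat then 0 else specker_coef a k (n - k).

Lemma specker_vec_S a k :
  specker_vec a k = addf (unitv k) (scal (specker_ratio a k) (specker_vec a (S k))).
Proof.
  apply functional_extensionality. intros n. unfold specker_vec, addf, scal, unitv.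
  destruct (excluded_middle_informative (k = n)) as [<-|Hkn].
  - rewrite Nat.ltb_irrefl, Nat.sub_diag. replace (k <? S k)%nat with true
      by (symmetry; apply Nat.ltb_lt; lia). cbn [specker_coef]. lia.
  - destruct (Nat.lt_ge_cases n k) as [Hlt|Hge].
    + replace (n <? k)%nat with true by (symmetry; apply Nat.ltb_lt; lia).
      replace (n <? S k)%nat with true by (symmetry; apply Nat.ltb_lt; lia). lia.
    + replace (n <? k)%nat with false by (symmetry; apply Nat.ltb_ge; lia).
      replace (n <? S k)%nat with false by (symmetry; apply Nat.ltb_ge; lia).
      replace (n - k)%nat with (S (n - S k)) by lia. cbn [specker_coef]. lia.
Qed.

Theorem additive_unitv_eventually_zero (h : (nat -> Z) -> Z) :
  (forall x y, h (addf x y) = h x + h y) ->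
  exists N, forall n, (N <= n)%nat -> h (unitv n) = 0.
Proof.
  intros h_add.
  set (a := fun n => h (unitv n)).
  set (t := fun k => h (specker_vec a k)).
  assert (Ht : forall k, t k = a k + specker_ratio a k * t (S k)).
  { intros k. unfold t at 1. rewrite specker_vec_S, h_add, additive_scal;
      [reflexivity | exact h_add | apply specker_ratio_nonneg]. }
  assert (Hexp : forall k, t 0%nat = specker_sum a k + specker_weight a k * t k).
  { induction k as [|k IH]; [change (t 0%nat = 0 + 1 * t 0%nat); lia|].
    rewrite IH, Ht. simpl specker_sum. rewrite specker_weight_S. ring. }
  assert (Hzero : forall k, 2 * Z.abs (t 0%nat) <= Z.of_nat k -> t k = 0).
  { apply (expansion_tail_zero _ (specker_sum a) (specker_weight a) t Hexp);
      intros k; pose proof (specker_invariants a k); lia. }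
  exists (Z.to_nat (2 * Z.abs (t 0%nat))). intros n Hn.
  pose proof (Ht n) as Hrec. rewrite (Hzero n), (Hzero (S n)) in Hrec by lia.
  change (a n = 0). lia.
Qed.

Definition extend_zero {K : Type} (s : nat -> K) (c : nat -> Z) : K -> Z :=
  fun xi => match excluded_middle_informative (exists n, s n = xi) with
            | left H => c (proj1_sig (constructive_indefinite_description _ H))
            | right _ => 0
            end.

Section ExtendZero.
Variables (K : Type) (s : nat -> K).
Hypothesis s_inj : Injective s.

Lemma extend_zero_at c n : extend_zero s c (s n) = c n.
Proof.
  unfold extend_zero. destruct (excluded_middle_informative _) as [H|H].
  - f_equal. apply s_inj. exact (proj2_sig (constructive_indefinite_description _ H)).
  - exfalso. apply H. now exists n.
Qed.

Lemma extend_zero_off c xi : ~ (exists n, s n = xi) -> extend_zero s c xi = 0.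
Proof.
  intros H. unfold extend_zero.
  destruct (excluded_middle_informative _); [contradiction | reflexivity].
Qed.

Lemma extend_zero_add x y : extend_zero s (addf x y) = addf (extend_zero s x) (extend_zero s y).
Proof.
  apply functional_extensionality. intros xi. unfold addf.
  destruct (classic (exists n, s n = xi)) as [[n <-]|H].
  - now rewrite !extend_zero_at.
  - now rewrite !extend_zero_off.
Qed.

Lemma extend_zero_unitv n : extend_zero s (unitv n) = unitv (s n).
Proof.
  apply functional_extensionality. intros xi.
  destruct (classic (exists m, s m = xi)) as [[m <-]|H].
  - rewrite extend_zero_at. unfold unitv.
    destruct (excluded_middle_informative (n = m)), (excluded_middle_informative (s n = s m));
      subst; auto; exfalso; auto.
  - rewrite extend_zero_off by exact H. unfold unitv.
    destruct (excluded_middle_informative (s n = xi)); [exfalso; eauto | reflexivity].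
Qed.

End ExtendZero.

Lemma card_le_range_nat {K : Type} (s : nat -> K) :
  card_le (fun xi => exists n, s n = xi) (allT nat).
Proof.
  assert (Hidx : forall xi, exists n, (exists m, s m = xi) -> s n = xi).
  { intros xi. destruct (classic (exists m, s m = xi)) as [[m Hm]|H].
    - now exists m.
    - exists 0%nat. contradiction. }
  destruct (choice _ Hidx) as [idx Hidx'].
  exists idx. split; [intros; exact I|].
  intros x y Hx Hy E. rewrite <- (Hidx' x Hx), <- (Hidx' y Hy), E. reflexivity.
Qed.

Lemma supp_extend_zero_countable {K : Type} (s : nat -> K) c :
  card_le (supp (extend_zero s c)) (allT nat).
Proof.
  apply (card_le_trans _ (fun xi => exists n, s n = xi)); [|apply card_le_range_nat].
  apply card_le_sub. intros xi H. apply NNPP. intros Hn. apply H, extend_zero_off, Hn.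
Qed.

Lemma inP_of_countable_supp (K A : Type) (x : K -> Z) :
  uncountable_type A -> card_le (supp x) (allT nat) -> inP K A x.
Proof.
  intros hA H. split.
  - apply (card_le_trans _ _ _ H), uncountable_card_le_nat, hA.
  - intros H'. apply hA. exact (card_le_trans _ _ _ H' H).
Qed.

Section AdditiveMap.
Variables (K L A : Type) (j : (K -> Z) -> (L -> Z)).
Hypothesis hA : uncountable_type A.
Hypothesis hjadd : forall x y, inP K A x -> inP K A y -> j (addf x y) = addf (j x) (j y).

Lemma inP_of_finite_supp (x : K -> Z) : finite_set (supp x) -> inP K A x.
Proof. intros H. apply inP_of_countable_supp, finite_card_le_nat; assumption. Qed.

Lemma finite_Fset nu : finite_set (Fset j nu).
Proof.
  apply NNPP. intros Hnf. destruct (not_finite_injective_seq _ Hnf) as [s [Hs s_inj]].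
  set (h := fun c => j (extend_zero s c) nu).
  assert (h_add : forall x y, h (addf x y) = h x + h y).
  { intros x y. unfold h. rewrite extend_zero_add, hjadd by
      (assumption || apply inP_of_countable_supp, supp_extend_zero_countable; assumption).
    reflexivity. }
  destruct (additive_unitv_eventually_zero h h_add) as [N HN].
  apply (Hs N). unfold Fset. rewrite <- (extend_zero_unitv K s s_inj N). apply HN. lia.
Qed.

Lemma additive_map_zero : j (fun _ => 0) = (fun _ => 0).
Proof.
  assert (H0 : inP K A (fun _ => 0)).
  { apply inP_of_finite_supp. exists nil. intros xi H. now apply H. }
  pose proof (hjadd _ _ H0 H0) as E.
  replace (addf (fun _ : K => 0) (fun _ => 0)) with (fun _ : K => 0) in E
    by (apply functional_extensionality; intros; unfold addf; lia).
  apply functional_extensionality. intros nu.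
  apply (f_equal (fun f => f nu)) in E. unfold addf in E. lia.
Qed.

Lemma Fset_cover :
  (forall x y, inP K A x -> inP K A y -> j x = j y -> x = y) ->
  forall xi, exists nu, Fset j nu xi.
Proof.
  intros hjinj xi. apply NNPP. intros Hno.
  assert (Hu : inP K A (unitv xi)).
  { apply inP_of_finite_supp. exists (xi :: nil). intros eta H. left.
    unfold supp, unitv in H. now destruct (excluded_middle_informative (xi = eta)). }
  assert (H0 : inP K A (fun _ => 0)).
  { apply inP_of_finite_supp. exists nil. intros eta H. now apply H. }
  assert (E : unitv xi = fun _ => 0).
  { apply hjinj; [assumption | assumption |]. rewrite additive_map_zero.
    apply functional_extensionality. intros nu. apply NNPP. intros H. apply Hno. now exists nu. }
  apply (f_equal (fun f => f xi)) in E. unfold unitv in E.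
  destruct (excluded_middle_informative (xi = xi)); [discriminate | auto].
Qed.

End AdditiveMap.

Lemma card_le_of_finite_fibers {X Y : Type} (R : X -> Y -> Prop) :
  card_le (allT nat) (allT X) -> (forall x, exists y, R x y) ->
  (forall y, finite_set (fun x => R x y)) ->
  card_le (allT X) (fun y => exists x, R x y).
Proof.
  intros HX Hcov Hfin.
  destruct (choice _ Hcov) as [f Hf].
  destruct (choice _ Hfin) as [fiber Hfiber].
  set (D := fun y => exists x, R x y).
  assert (HD : card_le (allT nat) D).
  { apply not_finite_card_le_nat. intros [lD HlD].
    apply (card_le_nat_not_finite (allT X) HX). exists (flat_map fiber lD).
    intros x _. apply in_flat_map. exists (f x). split.
    - apply HlD. now exists x.
    - apply Hfiber, Hf. }
  apply (card_le_trans _ (fun p : Y * nat => D (fst p))); [|apply card_le_prod_nat, HD].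
  exists (fun x => (f x, list_index x (fiber (f x)))). split.
  - intros x _. now exists x.
  - intros x y _ _ E. injection E as Ef Ei. rewrite Ef in Ei.
    apply (list_index_inj (fiber (f y))); [rewrite <- Ef | |]; auto.
Qed.

Theorem mainTheorem9 (K L A B : Type)
  (hK : infinite_type K) (hL : infinite_type L)
  (hA : uncountable_type A) (hAK : le_succ_card A K)
  (hB : infinite_type B) (hBL : le_succ_card B L)
  (j : (K -> Z) -> (L -> Z))
  (hjP : forall x, inP K A x -> inP L B (j x))
  (hjadd : forall x y, inP K A x -> inP K A y -> j (addf x y) = addf (j x) (j y))
  (hjinj : forall x y, inP K A x -> inP K A y -> j x = j y -> x = y) :
  (forall nu : L, finite_set (Fset j nu)) /\
  card_le (allT K) (fun nu : L => exists xi, Fset j nu xi) /\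
  card_le (allT K) (allT L).
Proof.
  assert (Hsupp : card_le (allT K) (fun nu : L => exists xi, Fset j nu xi)).
  { apply (card_le_of_finite_fibers (fun xi nu => Fset j nu xi) hK).
    - exact (Fset_cover K L A j hA hjadd hjinj).
    - exact (finite_Fset K L A j hA hjadd). }
  split; [exact (finite_Fset K L A j hA hjadd)|]. split; [exact Hsupp|].
  apply (card_le_trans _ _ _ Hsupp), card_le_sub. intros; exact I.
Qed.
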